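(* Let $T$ be a tetrahedron satisfying the maximum angle condition with bound $\theta_M<\pi$. Then $T$ has three edges $e_1,e_2,e_3$ (not necessarily sharing a common vertex) such that the matrix $M$ whose columns are the unit direction vectors of these edges satisfies $$|\det(M)|\ge c_m:=\min\{\sqrt3/2,\sin(\theta_M)\}\,\min\{\cos(\theta_M/2),\sin(\theta_M)\}^2,$$ and moreover $$\frac{c_m}{6}|e_1||e_2||e_3|\le|T|\le\frac16|e_1||e_2||e_3|.$$
   Context: A tetrahedron satisfies the maximum angle condition with bound $\theta_M$ if all its dihedral angles and all angles of its triangular faces are at most $\theta_M$. $|e_i|$ is the length of $e_i$, $|T|$ the volume of $T$. *)

From Stdlib Require Import Reals Lra.
Open Scope R_scope.

Record R3 := mkR3 { vx : R ; vy : R ; vz : R }.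

Definition vsub (a b : R3) : R3 := mkR3 (vx a - vx b) (vy a - vy b) (vz a - vz b).
Definition vscale (c : R) (a : R3) : R3 := mkR3 (c * vx a) (c * vy a) (c * vz a).
Definition dot (a b : R3) : R := vx a * vx b + vy a * vy b + vz a * vz b.
Definition vnorm (a : R3) : R := sqrt (dot a a).
Definition cross (a b : R3) : R3 :=
  mkR3 (vy a * vz b - vz a * vy b) (vz a * vx b - vx a * vz b) (vx a * vy b - vy a * vx b).

(* determinant of the 3x3 matrix whose columns are a, b, c *)
Definition det3 (a b c : R3) : R := dot a (cross b c).

Definition unitv (a : R3) : R3 := vscale (/ vnorm a) a.

Definition vangle (a b : R3) : R := acos (dot a b / (vnorm a * vnorm b)).

(* A tetrahedron is given by its four vertices p 0, p 1, p 2, p 3 (indices < 4). *)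
Definition tet_nondeg (p : nat -> R3) : Prop :=
  det3 (vsub (p 1%nat) (p 0%nat)) (vsub (p 2%nat) (p 0%nat)) (vsub (p 3%nat) (p 0%nat)) <> 0.

Definition tet_volume (p : nat -> R3) : R :=
  Rabs (det3 (vsub (p 1%nat) (p 0%nat)) (vsub (p 2%nat) (p 0%nat)) (vsub (p 3%nat) (p 0%nat))) / 6.

Definition face_angle (p : nat -> R3) (i j k : nat) : R :=
  vangle (vsub (p j) (p i)) (vsub (p k) (p i)).

Definition proj_orth (e a : R3) : R3 := vsub a (vscale (dot a e / dot e e) e).

Definition dihedral_angle (p : nat -> R3) (i j k l : nat) : R :=
  let e := vsub (p j) (p i) in
  vangle (proj_orth e (vsub (p k) (p i))) (proj_orth e (vsub (p l) (p i))).

Definition max_angle_cond (p : nat -> R3) (thM : R) : Prop :=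
  (forall i j k : nat, (i < 4)%nat -> (j < 4)%nat -> (k < 4)%nat ->
     i <> j -> i <> k -> j <> k -> face_angle p i j k <= thM) /\
  (forall i j k l : nat, (i < 4)%nat -> (j < 4)%nat -> (k < 4)%nat -> (l < 4)%nat ->
     i <> j -> i <> k -> i <> l -> j <> k -> j <> l -> k <> l ->
     dihedral_angle p i j k l <= thM).

Definition is_edge (i j : nat) : Prop := (i < j)%nat /\ (j < 4)%nat.

Definition edge_len (p : nat -> R3) (i j : nat) : R := vnorm (vsub (p j) (p i)).
Definition edge_dir (p : nat -> R3) (i j : nat) : R3 := unitv (vsub (p j) (p i)).

Definition c_m (thM : R) : R :=
  Rmin (sqrt 3 / 2) (sin thM) * (Rmin (cos (thM / 2)) (sin thM)) ^ 2.

(* At every vertex one of the three dihedral angles is at least pi / 3, because the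
   three face normals there cannot pairwise make angles larger than 2 pi / 3; being also
   at most theta_M, its sine is at least min (sqrt 3 / 2, sin theta_M).  In each of the
   two faces through that edge, the larger of the angles at the endpoints of the edge
   lies in [(pi - theta_M) / 2, theta_M], so its sine is at least
   min (cos (theta_M / 2), sin theta_M).  Take e1 the edge and e2, e3 the other sides
   of those two angles: |det M| is the product of the two face sines and the dihedral
   sine, while the triple product of the edge vectors themselves is 6 |T|.  Hadamard's
   inequality |det M| <= 1 gives the upper bound. *)

From Stdlib Require Import Reals Lra Lia.
Open Scope R_scope.

Definition vadd (a b : R3) : R3 := mkR3 (vx a + vx b) (vy a + vy b) (vz a + vz b).

Definition vcos (a b : R3) : R := dot a b / (vnorm a * vnorm b).
Definition vsin (a b : R3) : R := vnorm (cross a b) / (vnorm a * vnorm b).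

Ltac vec_unfold := unfold det3, cross, dot, vadd, vscale, vsub; simpl.
Ltac vec_ring := vec_unfold; ring.
Ltac vec_eq := vec_unfold; f_equal; ring.

Lemma dot_self_ge0 v : 0 <= dot v v.
Proof. unfold dot; nra. Qed.

Lemma vnorm_ge0 v : 0 <= vnorm v.
Proof. apply sqrt_pos. Qed.

Lemma vnorm_sqr v : vnorm v * vnorm v = dot v v.
Proof. apply sqrt_sqrt, dot_self_ge0. Qed.

Lemma vnorm_gt0 v : 0 < dot v v -> 0 < vnorm v.
Proof. apply sqrt_lt_R0. Qed.

Lemma vnorm_scale t a : vnorm (vscale t a) = Rabs t * vnorm a.
Proof.
  unfold vnorm.
  replace (dot (vscale t a) (vscale t a)) with (Rsqr t * dot a a) by (unfold Rsqr; vec_ring).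
  rewrite sqrt_mult_alt, sqrt_Rsqr_abs by apply Rle_0_sqr. reflexivity.
Qed.

Lemma vnorm_opp a : vnorm (vscale (-1) a) = vnorm a.
Proof. unfold vnorm; f_equal; vec_ring. Qed.

Lemma vsub_swap a b : vsub a b = vscale (-1) (vsub b a).
Proof. vec_eq. Qed.

Lemma cross_anticomm a b : cross b a = vscale (-1) (cross a b).
Proof. vec_eq. Qed.

Lemma det3_as_dot_cross a b c : det3 a b c = dot c (cross a b).
Proof. vec_ring. Qed.

Lemma lagrange_identity u v :
  dot (cross u v) (cross u v) = dot u u * dot v v - dot u v * dot u v.
Proof. vec_ring. Qed.

Lemma cauchy_schwarz u v : dot u v * dot u v <= dot u u * dot v v.
Proof. pose proof (dot_self_ge0 (cross u v)); rewrite lagrange_identity in *; lra. Qed.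

Lemma dot_pos_of_neq0 u v : dot u v <> 0 -> 0 < dot u u /\ 0 < dot v v.
Proof.
  intros H.
  assert (0 < dot u v * dot u v) by (destruct (Rlt_dec 0 (dot u v)); nra).
  pose proof (cauchy_schwarz u v); pose proof (dot_self_ge0 u); pose proof (dot_self_ge0 v).
  split; nra.
Qed.

Lemma cross_nonzero u v :
  0 < dot (cross u v) (cross u v) -> 0 < dot u u /\ 0 < dot v v.
Proof.
  rewrite lagrange_identity; intros H.
  pose proof (dot_self_ge0 u); pose proof (dot_self_ge0 v).
  split; nra.
Qed.

Lemma Rabs_eq_or_opp x y : x = y \/ x = - y -> Rabs x = Rabs y.
Proof. intros [-> | ->]; [reflexivity | apply Rabs_Ropp]. Qed.

Lemma vsin_ge0 a b : 0 <= vsin a b.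
Proof.
  unfold vsin, Rdiv.
  assert (H : 0 <= vnorm a * vnorm b) by (apply Rmult_le_pos; apply vnorm_ge0).
  destruct (Rle_lt_or_eq_dec _ _ H) as [Hpos | <-].
  - apply Rle_mult_inv_pos; [apply vnorm_ge0 | exact Hpos].
  - rewrite Rinv_0, Rmult_0_r; lra.
Qed.

Lemma vsin_sqr a b : 0 < dot a a -> 0 < dot b b ->
  vsin a b * vsin a b = 1 - vcos a b * vcos a b.
Proof.
  intros Ha Hb; pose proof (vnorm_gt0 a Ha); pose proof (vnorm_gt0 b Hb).
  unfold vsin, vcos.
  replace (vnorm (cross a b) / (vnorm a * vnorm b) * (vnorm (cross a b) / (vnorm a * vnorm b)))
    with (vnorm (cross a b) * vnorm (cross a b) / ((vnorm a * vnorm a) * (vnorm b * vnorm b)))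
    by (field; lra).
  rewrite !vnorm_sqr, lagrange_identity, <- !vnorm_sqr. field; lra.
Qed.

Lemma vcos_bound a b : 0 < dot a a -> 0 < dot b b -> -1 <= vcos a b <= 1.
Proof.
  intros Ha Hb; pose proof (vsin_sqr a b Ha Hb).
  pose proof (vsin_ge0 a b). nra.
Qed.

Lemma vcos_self a : 0 < dot a a -> vcos a a = 1.
Proof.
  intros Ha; pose proof (vnorm_gt0 a Ha).
  unfold vcos; rewrite vnorm_sqr; field; lra.
Qed.

Lemma vcos_comm a b : vcos a b = vcos b a.
Proof.
  unfold vcos; rewrite Rmult_comm; f_equal; vec_ring.
Qed.

Lemma vcos_oppl a b : vcos (vscale (-1) a) b = - vcos a b.
Proof.
  unfold vcos; rewrite vnorm_opp.
  replace (dot (vscale (-1) a) b) with (- dot a b) by vec_ring.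
  unfold Rdiv; ring.
Qed.

Lemma vcos_oppr a b : vcos a (vscale (-1) b) = - vcos a b.
Proof. rewrite vcos_comm, vcos_oppl, vcos_comm; reflexivity. Qed.

Lemma cos_le_vcos a b th : 0 < dot a a -> 0 < dot b b -> 0 <= th <= PI ->
  vangle a b <= th -> cos th <= vcos a b.
Proof.
  intros Ha Hb Hth H; change (acos (vcos a b) <= th) in H.
  rewrite <- (cos_acos (vcos a b)) by (apply vcos_bound; assumption).
  pose proof (acos_bound (vcos a b)).
  apply cos_decr_1; lra.
Qed.

Lemma dot_unitv a b : 0 < dot a a -> 0 < dot b b -> dot (unitv a) (unitv b) = vcos a b.
Proof.
  intros Ha Hb; pose proof (vnorm_gt0 a Ha); pose proof (vnorm_gt0 b Hb).
  unfold unitv, vcos; vec_unfold; field; lra.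
Qed.

Lemma dot_proj_orth e x y : 0 < dot e e ->
  dot (proj_orth e x) (proj_orth e y) = dot (cross e x) (cross e y) / dot e e.
Proof. intros He; unfold proj_orth; vec_unfold; field; unfold dot in He; lra. Qed.

Lemma vnorm_proj_orth e x : 0 < dot e e ->
  vnorm (proj_orth e x) = vnorm (cross e x) / vnorm e.
Proof.
  intros He; pose proof (vnorm_gt0 e He).
  unfold vnorm at 1; rewrite dot_proj_orth, <- !vnorm_sqr by exact He.
  replace (vnorm (cross e x) * vnorm (cross e x) / (vnorm e * vnorm e))
    with (Rsqr (vnorm (cross e x) / vnorm e)) by (unfold Rsqr; field; lra).
  apply sqrt_Rsqr, Rle_mult_inv_pos; [apply vnorm_ge0 | assumption].
Qed.

Lemma vcos_proj_orth e x y : 0 < dot e e ->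
  0 < dot (cross e x) (cross e x) -> 0 < dot (cross e y) (cross e y) ->
  vcos (proj_orth e x) (proj_orth e y) = vcos (cross e x) (cross e y).
Proof.
  intros He Hx Hy.
  pose proof (vnorm_gt0 e He); pose proof (vnorm_gt0 _ Hx); pose proof (vnorm_gt0 _ Hy).
  unfold vcos; rewrite dot_proj_orth, !vnorm_proj_orth, <- (vnorm_sqr e) by exact He.
  field; repeat split; lra.
Qed.

Lemma vcos_sum_ge u v w : 0 < dot u u -> 0 < dot v v -> 0 < dot w w ->
  - (3 / 2) <= vcos u v + vcos v w + vcos w u.
Proof.
  intros Hu Hv Hw.
  set (s := vadd (vadd (unitv u) (unitv v)) (unitv w)).
  assert (Hs : dot s s = dot (unitv u) (unitv u) + dot (unitv v) (unitv v)
     + dot (unitv w) (unitv w) + 2 * (dot (unitv u) (unitv v) + dot (unitv v) (unitv w)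
     + dot (unitv w) (unitv u))) by (unfold s; vec_ring).
  rewrite !dot_unitv, !vcos_self in Hs by assumption.
  pose proof (dot_self_ge0 s); lra.
Qed.

(* Three nonzero vectors cannot pairwise make angles above 2 pi / 3, so the face
   normals at a vertex force one of the dihedral angles there to be at least pi / 3. *)
Lemma dihedral_cos_le_half a b c :
  0 < dot (cross a b) (cross a b) -> 0 < dot (cross b c) (cross b c) ->
  0 < dot (cross c a) (cross c a) ->
  vcos (cross a b) (cross a c) <= 1 / 2 \/ vcos (cross b a) (cross b c) <= 1 / 2 \/
  vcos (cross c a) (cross c b) <= 1 / 2.
Proof.
  intros Hab Hbc Hca.
  rewrite (cross_anticomm c a), (cross_anticomm a b), (cross_anticomm b c).
  rewrite vcos_oppr, vcos_oppl, vcos_oppr, (vcos_comm (cross a b) (cross c a)),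
    (vcos_comm (cross c a) (cross b c)).
  pose proof (vcos_sum_ge _ _ _ Hab Hbc Hca).
  destruct (Rle_lt_dec (- vcos (cross c a) (cross a b)) (1 / 2)); [now left | right].
  destruct (Rle_lt_dec (- vcos (cross a b) (cross b c)) (1 / 2)); [now left | right].
  lra.
Qed.

(* The angle between b and b - a is the difference of the angles that a makes
   with b - a and with b. *)
Lemma vcos_sub a b : 0 < dot (cross a b) (cross a b) ->
  vcos b (vsub b a) = vsin a b * vsin a (vsub b a) + vcos a b * vcos a (vsub b a).
Proof.
  intros H; destruct (cross_nonzero a b H) as [Ha Hb].
  assert (Ec : cross a (vsub b a) = cross a b) by vec_eq.
  assert (Hd : 0 < dot (vsub b a) (vsub b a))
    by (apply (cross_nonzero a); rewrite Ec; exact H).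
  pose proof (vnorm_gt0 a Ha); pose proof (vnorm_gt0 b Hb); pose proof (vnorm_gt0 _ Hd).
  unfold vsin, vcos; rewrite Ec.
  replace (dot b (vsub b a)) with (dot b b - dot a b) by vec_ring.
  replace (dot a (vsub b a)) with (dot a b - dot a a) by vec_ring.
  assert (HK : vnorm (cross a b) * vnorm (cross a b) = dot a a * dot b b - dot a b * dot a b)
    by (rewrite vnorm_sqr; apply lagrange_identity).
  rewrite <- (vnorm_sqr a), <- (vnorm_sqr b) in *.
  match goal with |- _ = ?rhs => replace rhs with
    ((vnorm (cross a b) * vnorm (cross a b)
      + dot a b * (dot a b - vnorm a * vnorm a))
     / (vnorm a * vnorm a * vnorm b * vnorm (vsub b a))) by (field; lra) end.
  rewrite HK; field; lra.
Qed.

(* x, y are the cosines and sx, sy the sines of two angles of a triangle, so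
   sx * sy - x * y is the cosine of the third; the larger of the two angles lies in
   [(pi - theta) / 2, theta] when all three are at most theta, with c = cos theta. *)
Lemma sin_sqr_ge_in_triangle c x y sx sy : 0 <= sx -> 0 <= sy ->
  sx * sx + x * x = 1 -> sy * sy + y * y = 1 ->
  c <= x -> c <= y -> c <= sx * sy - x * y ->
  Rmin ((1 + c) / 2) (1 - c * c) <= sx * sx \/ Rmin ((1 + c) / 2) (1 - c * c) <= sy * sy.
Proof.
  assert (larger_angle : forall x y sx sy, 0 <= sx -> 0 <= sy ->
    sx * sx + x * x = 1 -> sy * sy + y * y = 1 ->
    c <= x -> c <= sx * sy - x * y -> x <= y ->
    Rmin ((1 + c) / 2) (1 - c * c) <= sx * sx).
  { intros x' y' sx' sy' Hsx Hsy Ex Ey Hx Hz Hxy.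
    destruct (Rle_dec x' 0).
    - apply Rle_trans with (1 - c * c); [apply Rmin_r | nra].
    - assert (sy' <= sx') by nra.
      apply Rle_trans with ((1 + c) / 2); [apply Rmin_l | nra]. }
  intros Hsx Hsy Ex Ey Hx Hy Hz.
  destruct (Rle_dec x y).
  - left; apply (larger_angle x y sx sy); auto.
  - right; apply (larger_angle y x sy sx); auto; lra.
Qed.

Lemma Rmin_le_of_sqr x y s : 0 <= x -> 0 <= y -> 0 <= s ->
  Rmin (x * x) (y * y) <= s * s -> Rmin x y <= s.
Proof. unfold Rmin; destruct (Rle_dec x y), (Rle_dec (x * x) (y * y)); nra. Qed.

Lemma Rmin_cos_half_sin_le th s : 0 <= th <= PI -> 0 <= s ->
  Rmin ((1 + cos th) / 2) (1 - cos th * cos th) <= s * s ->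
  Rmin (cos (th / 2)) (sin th) <= s.
Proof.
  intros Hth Hs H; apply Rmin_le_of_sqr; auto.
  - apply cos_ge_0; lra.
  - apply sin_ge_0; lra.
  - assert (Ec : cos (th / 2) * cos (th / 2) = (1 + cos th) / 2).
    { replace th with (2 * (th / 2)) at 3 by field; rewrite cos_2a_cos; field. }
    pose proof (sin2_cos2 th); unfold Rsqr in *.
    rewrite Ec; replace (sin th * sin th) with (1 - cos th * cos th) by lra; exact H.
Qed.

Lemma Rmin_sqrt3_sin_le th s : 0 <= th <= PI -> 0 <= s ->
  Rmin (3 / 4) (1 - cos th * cos th) <= s * s ->
  Rmin (sqrt 3 / 2) (sin th) <= s.
Proof.
  intros Hth Hs H; apply Rmin_le_of_sqr; auto.
  - pose proof (sqrt_pos 3); lra.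
  - apply sin_ge_0; lra.
  - assert (E3 : sqrt 3 / 2 * (sqrt 3 / 2) = 3 / 4).
    { replace (sqrt 3 / 2 * (sqrt 3 / 2)) with (sqrt 3 * sqrt 3 / 4) by field.
      rewrite sqrt_sqrt by lra; field. }
    pose proof (sin2_cos2 th); unfold Rsqr in *.
    rewrite E3; replace (sin th * sin th) with (1 - cos th * cos th) by lra; exact H.
Qed.

Lemma triangle_vsin_ge X Y Z th : 0 <= th <= PI ->
  0 < dot (cross (vsub Y X) (vsub Z X)) (cross (vsub Y X) (vsub Z X)) ->
  cos th <= vcos (vsub Y X) (vsub Z X) -> cos th <= vcos (vsub X Y) (vsub Z Y) ->
  cos th <= vcos (vsub X Z) (vsub Y Z) ->
  Rmin (cos (th / 2)) (sin th) <= vsin (vsub Y X) (vsub Z X) \/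
  Rmin (cos (th / 2)) (sin th) <= vsin (vsub Y X) (vsub Z Y).
Proof.
  intros Hth H Hx Hy Hz.
  rewrite (vsub_swap X Y), vcos_oppl in Hy.
  rewrite (vsub_swap X Z), (vsub_swap Y Z), vcos_oppl, vcos_oppr, Ropp_involutive in Hz.
  assert (Ed : vsub Z Y = vsub (vsub Z X) (vsub Y X)) by vec_eq.
  rewrite Ed in *; set (a := vsub Y X) in *; set (b := vsub Z X) in *.
  destruct (cross_nonzero a b H) as [Ha Hb].
  assert (Hd : 0 < dot (vsub b a) (vsub b a)).
  { apply (cross_nonzero a).
    replace (cross a (vsub b a)) with (cross a b) by vec_eq; exact H. }
  destruct (sin_sqr_ge_in_triangle (cos th) (vcos a b) (- vcos a (vsub b a))
              (vsin a b) (vsin a (vsub b a))) as [T | T];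
    try apply vsin_ge0; auto.
  - rewrite vsin_sqr by assumption; ring.
  - rewrite vsin_sqr by assumption; ring.
  - rewrite vcos_sub in Hz by exact H; lra.
  - left; apply Rmin_cos_half_sin_le; auto using vsin_ge0.
  - right; apply Rmin_cos_half_sin_le; auto using vsin_ge0.
Qed.

Lemma vsin_ge_of_vcos_le_half a b th : 0 <= th <= PI ->
  0 < dot a a -> 0 < dot b b -> cos th <= vcos a b <= 1 / 2 ->
  Rmin (sqrt 3 / 2) (sin th) <= vsin a b.
Proof.
  intros Hth Ha Hb Hc.
  apply Rmin_sqrt3_sin_le; auto using vsin_ge0.
  rewrite vsin_sqr by assumption.
  destruct (Rle_dec 0 (vcos a b)).
  - apply Rle_trans with (3 / 4); [apply Rmin_l | nra].
  - apply Rle_trans with (1 - cos th * cos th); [apply Rmin_r | nra].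
Qed.

Lemma det3_unitv a b c : 0 < dot a a -> 0 < dot b b -> 0 < dot c c ->
  det3 (unitv a) (unitv b) (unitv c) = det3 a b c / (vnorm a * vnorm b * vnorm c).
Proof.
  intros Ha Hb Hc.
  pose proof (vnorm_gt0 a Ha); pose proof (vnorm_gt0 b Hb); pose proof (vnorm_gt0 c Hc).
  unfold unitv; vec_unfold; field; lra.
Qed.

Lemma cross_cross_common a b c : cross (cross a b) (cross a c) = vscale (det3 a b c) a.
Proof. vec_eq. Qed.

Lemma Rabs_det3_unitv a b c :
  0 < dot (cross a b) (cross a b) -> 0 < dot (cross a c) (cross a c) ->
  Rabs (det3 (unitv a) (unitv b) (unitv c)) =
  vsin a b * vsin a c * vsin (cross a b) (cross a c).
Proof.
  intros Hab Hac.
  destruct (cross_nonzero a b Hab) as [Ha Hb]; destruct (cross_nonzero a c Hac) as [_ Hc].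
  pose proof (vnorm_gt0 a Ha); pose proof (vnorm_gt0 b Hb); pose proof (vnorm_gt0 c Hc).
  pose proof (vnorm_gt0 _ Hab); pose proof (vnorm_gt0 _ Hac).
  rewrite det3_unitv by assumption.
  unfold vsin; rewrite cross_cross_common, vnorm_scale.
  unfold Rdiv; rewrite Rabs_mult, Rabs_inv, (Rabs_right (vnorm a * vnorm b * vnorm c)).
  - field; repeat split; lra.
  - apply Rle_ge, Rmult_le_pos; [apply Rmult_le_pos|]; lra.
Qed.

Lemma Rabs_det3_le a b c : Rabs (det3 a b c) <= vnorm a * vnorm b * vnorm c.
Proof.
  pose proof (vnorm_ge0 a); pose proof (vnorm_ge0 b); pose proof (vnorm_ge0 c).
  apply Rsqr_incr_0_var; [| apply Rmult_le_pos; [apply Rmult_le_pos|]; assumption].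
  rewrite <- Rsqr_abs; unfold Rsqr.
  replace (vnorm a * vnorm b * vnorm c * (vnorm a * vnorm b * vnorm c))
    with (dot a a * (dot b b * dot c c)) by (rewrite <- !vnorm_sqr; ring).
  pose proof (cauchy_schwarz a (cross b c)); pose proof (cauchy_schwarz b c).
  pose proof (dot_self_ge0 a); rewrite lagrange_identity in *.
  unfold det3; nra.
Qed.

Lemma det3_neq0_dot_pos a b c : det3 a b c <> 0 ->
  0 < dot a a /\ 0 < dot b b /\ 0 < dot c c.
Proof.
  intros H; split; [|split].
  - exact (proj1 (dot_pos_of_neq0 a (cross b c) H)).
  - apply (dot_pos_of_neq0 b (cross c a)).
    replace (dot b (cross c a)) with (det3 a b c) by vec_ring; exact H.
  - apply (dot_pos_of_neq0 c (cross a b)); rewrite <- det3_as_dot_cross; exact H.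
Qed.

Lemma volume_bounds a b c m V : Rabs (det3 a b c) = 6 * V -> 0 < V ->
  m <= Rabs (det3 (unitv a) (unitv b) (unitv c)) ->
  m / 6 * (vnorm a * vnorm b * vnorm c) <= V /\ V <= / 6 * (vnorm a * vnorm b * vnorm c).
Proof.
  intros HV HVpos Hm.
  assert (Hdet : det3 a b c <> 0) by (intro E; rewrite E, Rabs_R0 in HV; lra).
  destruct (det3_neq0_dot_pos a b c Hdet) as (Ha & Hb & Hc).
  pose proof (Rabs_det3_le a b c).
  rewrite det3_unitv in Hm by assumption.
  pose proof (vnorm_gt0 a Ha); pose proof (vnorm_gt0 b Hb); pose proof (vnorm_gt0 c Hc).
  set (L := vnorm a * vnorm b * vnorm c) in *.
  assert (HL : 0 < L) by (unfold L; repeat apply Rmult_lt_0_compat; assumption).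
  unfold Rdiv in Hm; rewrite Rabs_mult, Rabs_inv, (Rabs_right L) in Hm by lra.
  apply (Rmult_le_compat_r L) in Hm; [| lra].
  replace (Rabs (det3 a b c) * / L * L) with (Rabs (det3 a b c)) in Hm by (field; lra).
  split; lra.
Qed.

Lemma cross_edges_through X Y Z I : I = X \/ I = Y ->
  cross (vsub Y X) (vsub Z I) = cross (vsub Y X) (vsub Z X).
Proof. intros [-> | ->]; [reflexivity | vec_eq]. Qed.

Lemma det3_edges_through X Y Z W I J : I = X \/ I = Y -> J = X \/ J = Y ->
  det3 (vsub Y X) (vsub Z I) (vsub W J) = det3 (vsub Y X) (vsub Z X) (vsub W X).
Proof. intros [-> | ->] [-> | ->]; vec_ring. Qed.

Lemma Rabs_det3_opp_cols a b c a' b' c' :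
  a' = a \/ a' = vscale (-1) a -> b' = b \/ b' = vscale (-1) b ->
  c' = c \/ c' = vscale (-1) c ->
  Rabs (det3 a' b' c') = Rabs (det3 a b c).
Proof.
  intros [-> | ->] [-> | ->] [-> | ->];
    apply Rabs_eq_or_opp; first [left; vec_ring | right; vec_ring].
Qed.

Lemma edge_len_sorted p i j : edge_len p (Nat.min i j) (Nat.max i j) = edge_len p i j.
Proof.
  unfold edge_len; destruct (Nat.le_ge_cases i j).
  - rewrite Nat.min_l, Nat.max_r by assumption; reflexivity.
  - rewrite Nat.min_r, Nat.max_l, vsub_swap by assumption; apply vnorm_opp.
Qed.

Lemma edge_dir_sorted p i j :
  edge_dir p (Nat.min i j) (Nat.max i j) = edge_dir p i j \/
  edge_dir p (Nat.min i j) (Nat.max i j) = vscale (-1) (edge_dir p i j).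
Proof.
  unfold edge_dir; destruct (Nat.le_ge_cases i j).
  - left; rewrite Nat.min_l, Nat.max_r by assumption; reflexivity.
  - right; rewrite Nat.min_r, Nat.max_l, vsub_swap by assumption.
    unfold unitv; rewrite vnorm_opp; vec_eq.
Qed.

Section Tetrahedron.

Variable p : nat -> R3.
Variable th : R.
Hypothesis nondeg : tet_nondeg p.
Hypothesis angle_bound : max_angle_cond p th.
Hypothesis th_lt_PI : th < PI.

Lemma tet_volume_gt0 : 0 < tet_volume p.
Proof. unfold tet_volume; apply Rdiv_lt_0_compat; [apply Rabs_pos_lt, nondeg | lra]. Qed.

Lemma Rabs_det3_vertices i j k l :
  (i < 4 /\ j < 4 /\ k < 4 /\ l < 4 /\
   i <> j /\ i <> k /\ i <> l /\ j <> k /\ j <> l /\ k <> l)%nat ->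
  Rabs (det3 (vsub (p j) (p i)) (vsub (p k) (p i)) (vsub (p l) (p i))) = 6 * tet_volume p.
Proof.
  intros H; unfold tet_volume.
  replace (6 * (_ / 6)) with
    (Rabs (det3 (vsub (p 1%nat) (p 0%nat)) (vsub (p 2%nat) (p 0%nat)) (vsub (p 3%nat) (p 0%nat))))
    by field.
  apply Rabs_eq_or_opp.
  destruct i as [|[|[|[|i]]]]; destruct j as [|[|[|[|j]]]];
  destruct k as [|[|[|[|k]]]]; destruct l as [|[|[|[|l]]]]; try lia;
    first [left; vec_ring | right; vec_ring].
Qed.

Lemma face_normal_nonzero i j k :
  (i < 4 /\ j < 4 /\ k < 4 /\ i <> j /\ i <> k /\ j <> k)%nat ->
  0 < dot (cross (vsub (p j) (p i)) (vsub (p k) (p i)))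
          (cross (vsub (p j) (p i)) (vsub (p k) (p i))).
Proof.
  intros H.
  (* the fourth vertex is 6 - i - j - k *)
  pose proof (Rabs_det3_vertices i j k (6 - i - j - k) ltac:(lia)) as Hdet.
  pose proof tet_volume_gt0.
  apply (dot_pos_of_neq0 (vsub (p (6 - i - j - k)) (p i))).
  rewrite <- det3_as_dot_cross; intro E; rewrite E, Rabs_R0 in Hdet; lra.
Qed.

Lemma th_bounds : 0 <= th <= PI.
Proof.
  split; [|lra].
  destruct angle_bound as [Hface _].
  pose proof (Hface 0%nat 1%nat 2%nat ltac:(lia) ltac:(lia) ltac:(lia) ltac:(lia) ltac:(lia) ltac:(lia)).
  unfold face_angle, vangle in *.
  match goal with H : acos ?x <= th |- _ => pose proof (acos_bound x) end; lra.
Qed.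

Lemma face_cos_ge i j k :
  (i < 4 /\ j < 4 /\ k < 4 /\ i <> j /\ i <> k /\ j <> k)%nat ->
  cos th <= vcos (vsub (p j) (p i)) (vsub (p k) (p i)).
Proof.
  intros H; destruct (cross_nonzero _ _ (face_normal_nonzero i j k H)).
  apply cos_le_vcos; auto using th_bounds.
  apply (proj1 angle_bound); lia.
Qed.

Lemma dihedral_cos_ge i j k l :
  (i < 4 /\ j < 4 /\ k < 4 /\ l < 4 /\
   i <> j /\ i <> k /\ i <> l /\ j <> k /\ j <> l /\ k <> l)%nat ->
  cos th <= vcos (cross (vsub (p j) (p i)) (vsub (p k) (p i)))
                 (cross (vsub (p j) (p i)) (vsub (p l) (p i))).
Proof.
  intros H.
  pose proof (face_normal_nonzero i j k ltac:(lia)) as Hk.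
  pose proof (face_normal_nonzero i j l ltac:(lia)) as Hl.
  destruct (cross_nonzero _ _ Hk) as [He _].
  rewrite <- vcos_proj_orth by assumption.
  apply cos_le_vcos; auto using th_bounds.
  - rewrite dot_proj_orth by assumption; apply Rdiv_lt_0_compat; assumption.
  - rewrite dot_proj_orth by assumption; apply Rdiv_lt_0_compat; assumption.
  - apply (proj2 angle_bound); lia.
Qed.

Lemma exists_face_vsin_ge i j k :
  (i < 4 /\ j < 4 /\ k < 4 /\ i <> j /\ i <> k /\ j <> k)%nat ->
  exists i2, (i2 = i \/ i2 = j) /\
    Rmin (cos (th / 2)) (sin th) <= vsin (vsub (p j) (p i)) (vsub (p k) (p i2)).
Proof.
  intros H.
  destruct (triangle_vsin_ge (p i) (p j) (p k) th th_bounds (face_normal_nonzero i j k H)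
              (face_cos_ge i j k H) (face_cos_ge j i k ltac:(lia)) (face_cos_ge k i j ltac:(lia)))
    as [T | T]; [exists i | exists j]; auto.
Qed.

Lemma exists_wide_dihedral_at_0 : exists j k l,
  (0 < j < 4 /\ 0 < k < 4 /\ 0 < l < 4 /\ j <> k /\ j <> l /\ k <> l)%nat /\
  vcos (cross (vsub (p j) (p 0%nat)) (vsub (p k) (p 0%nat)))
       (cross (vsub (p j) (p 0%nat)) (vsub (p l) (p 0%nat))) <= 1 / 2.
Proof.
  destruct (dihedral_cos_le_half (vsub (p 1%nat) (p 0%nat)) (vsub (p 2%nat) (p 0%nat))
              (vsub (p 3%nat) (p 0%nat)) (face_normal_nonzero 0 1 2 ltac:(lia))
              (face_normal_nonzero 0 2 3 ltac:(lia)) (face_normal_nonzero 0 3 1 ltac:(lia)))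
    as [H | [H | H]].
  - exists 1%nat, 2%nat, 3%nat; split; [lia | exact H].
  - exists 2%nat, 1%nat, 3%nat; split; [lia | exact H].
  - exists 3%nat, 1%nat, 2%nat; split; [lia | exact H].
Qed.

Lemma exists_edge_triple i j k l :
  (i < 4 /\ j < 4 /\ k < 4 /\ l < 4 /\
   i <> j /\ i <> k /\ i <> l /\ j <> k /\ j <> l /\ k <> l)%nat ->
  vcos (cross (vsub (p j) (p i)) (vsub (p k) (p i)))
       (cross (vsub (p j) (p i)) (vsub (p l) (p i))) <= 1 / 2 ->
  exists i2 i3, (i2 = i \/ i2 = j) /\ (i3 = i \/ i3 = j) /\
    c_m th <= Rabs (det3 (edge_dir p i j) (edge_dir p i2 k) (edge_dir p i3 l)).
Proof.
  intros H Hdih.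
  pose proof th_bounds as Hth.
  destruct (exists_face_vsin_ge i j k ltac:(lia)) as (i2 & Hi2 & Tk).
  destruct (exists_face_vsin_ge i j l ltac:(lia)) as (i3 & Hi3 & Tl).
  exists i2, i3; split; [|split]; auto.
  pose proof (face_normal_nonzero i j k ltac:(lia)) as Nk.
  pose proof (face_normal_nonzero i j l ltac:(lia)) as Nl.
  assert (Ek : cross (vsub (p j) (p i)) (vsub (p k) (p i2)) =
               cross (vsub (p j) (p i)) (vsub (p k) (p i)))
    by (apply cross_edges_through; destruct Hi2; subst; auto).
  assert (El : cross (vsub (p j) (p i)) (vsub (p l) (p i3)) =
               cross (vsub (p j) (p i)) (vsub (p l) (p i)))
    by (apply cross_edges_through; destruct Hi3; subst; auto).
  pose proof (vsin_ge_of_vcos_le_half _ _ th Hth Nk Nl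
                (conj (dihedral_cos_ge i j k l H) Hdih)) as Td.
  unfold edge_dir; rewrite Rabs_det3_unitv by (rewrite ?Ek, ?El; assumption).
  rewrite Ek, El; unfold c_m.
  assert (0 <= Rmin (cos (th / 2)) (sin th))
    by (apply Rmin_glb; [apply cos_ge_0 | apply sin_ge_0]; lra).
  assert (0 <= Rmin (sqrt 3 / 2) (sin th))
    by (apply Rmin_glb; [pose proof (sqrt_pos 3) | apply sin_ge_0]; lra).
  replace (_ * _ ^ 2) with
    (Rmin (cos (th / 2)) (sin th) * Rmin (cos (th / 2)) (sin th) * Rmin (sqrt 3 / 2) (sin th))
    by ring.
  apply Rmult_le_compat; auto using Rmult_le_pos.
  apply Rmult_le_compat; auto.
Qed.

End Tetrahedron.

Theorem lemmaC2 (p : nat -> R3) (thM : R) :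
  tet_nondeg p -> thM < PI -> max_angle_cond p thM ->
  exists i1 j1 i2 j2 i3 j3 : nat,
    is_edge i1 j1 /\ is_edge i2 j2 /\ is_edge i3 j3 /\
    (i1, j1) <> (i2, j2) /\ (i1, j1) <> (i3, j3) /\ (i2, j2) <> (i3, j3) /\
    Rabs (det3 (edge_dir p i1 j1) (edge_dir p i2 j2) (edge_dir p i3 j3)) >= c_m thM /\
    c_m thM / 6 * (edge_len p i1 j1 * edge_len p i2 j2 * edge_len p i3 j3)
      <= tet_volume p /\
    tet_volume p <= / 6 * (edge_len p i1 j1 * edge_len p i2 j2 * edge_len p i3 j3).
Proof.
  intros Hnd Hlt Hmac.
  destruct (exists_wide_dihedral_at_0 p Hnd) as (j & k & l & Hjkl & Hdih).
  destruct (exists_edge_triple p thM Hnd Hmac Hlt 0 j k l ltac:(lia) Hdih)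
    as (i2 & i3 & Hi2 & Hi3 & Hdet).
  assert (Hvol : Rabs (det3 (vsub (p j) (p 0%nat)) (vsub (p k) (p i2)) (vsub (p l) (p i3)))
                 = 6 * tet_volume p).
  { rewrite det3_edges_through by (destruct Hi2, Hi3; subst; auto).
    apply Rabs_det3_vertices; lia. }
  destruct (volume_bounds _ _ _ _ _ Hvol (tet_volume_gt0 p Hnd) Hdet) as [Hlow Hup].
  exists 0%nat, j, (Nat.min i2 k), (Nat.max i2 k), (Nat.min i3 l), (Nat.max i3 l).
  rewrite !edge_len_sorted.
  rewrite (Rabs_det3_opp_cols (edge_dir p 0 j) (edge_dir p i2 k) (edge_dir p i3 l))
    by first [apply edge_dir_sorted | now left].
  unfold is_edge; repeat split; try lia; try (intro E; injection E; lia).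
  - apply Rle_ge, Hdet.
  - exact Hlow.
  - exact Hup.
Qed.
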